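(* Assume $\delta>d$ and $\alpha=\gamma/(\delta-d)$. Then $$\frac{|q(z,w)|/|p(z)|^\alpha}{\big(|w|/|z|^\alpha\big)^d}\longrightarrow 1\quad\text{as } |z|\to\infty \text{ and } |w|/|z|^\alpha\to\infty,$$ and there is $R_0>0$ such that for every $R\ge R_0$ the set $W_R=\{(z,w):|z|>R,\ |w|>R|z|^\alpha\}$ satisfies $f(W_R)\subset W_R$.
   Context: Let $p(z)=z^\delta+O(z^{\delta-1})$ be a monic polynomial of degree $\delta\ge 2$, and let $q(z,w)=b(z)w^d+(\text{terms of lower degree in } w)$ be a polynomial with $d=\deg_w q\ge 2$, where $b$ is a monic polynomial of degree $\gamma\ge 0$. Let $f(z,w)=(p(z),q(z,w))$. For $\delta>d$, define $$\alpha=\max\Big\{\frac{n_j}{\delta-m_j}\;:\; z^{n_j}w^{m_j}\text{ is a monomial appearing in } q \text{ with nonzero coefficient}\Big\}.$$ *)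

From Stdlib Require Import Reals Lra List.
Open Scope R_scope.

(* Complex numbers as pairs (real part, imaginary part). *)
Definition CC : Type := (R * R)%type.
Definition C0 : CC := (0, 0).
Definition C1 : CC := (1, 0).
Definition Cadd (a b : CC) : CC := (fst a + fst b, snd a + snd b).
Definition Cmul (a b : CC) : CC :=
  (fst a * fst b - snd a * snd b, fst a * snd b + snd a * fst b).
Definition Cnorm (a : CC) : R := sqrt (fst a ^ 2 + snd a ^ 2).

Definition Ceq_dec (a b : CC) : {a = b} + {a <> b}.
Proof. decide equality; apply Req_EM_T. Defined.

(* Univariate polynomial: list of coefficients in ASCENDING order,
   l = [c_0; c_1; ...] represents c_0 + c_1 z + c_2 z^2 + ... *)
Fixpoint peval (l : list CC) (z : CC) : CC :=
  match l with
  | nil => C0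
  | c :: l' => Cadd c (Cmul z (peval l' z))
  end.

Definition monic_deg (l : list CC) (n : nat) : Prop :=
  length l = S n /\ nth n l C0 = C1.

(* Bivariate polynomial q(z,w) = sum_m (nth m q) (z) * w^m :
   q is the list of its coefficients in w (ascending), each a polynomial in z. *)
Definition qeval (q : list (list CC)) (z w : CC) : CC :=
  peval (map (fun c => peval c z) q) w.

Definition qcoef (q : list (list CC)) (n m : nat) : CC := nth n (nth m q nil) C0.

Definition monomials (q : list (list CC)) : list (nat * nat) :=
  flat_map (fun m =>
     flat_map (fun n => if Ceq_dec (qcoef q n m) C0 then nil else (n, m) :: nil)
              (seq 0 (length (nth m q nil))))
    (seq 0 (length q)).

(* alpha = max { n / (delta - m) : z^n w^m a monomial of q }.
   (Folding Rmax from 0 is harmless: all the ratios are >= 0 and the set is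
   nonempty since b(z) w^d is part of q.) *)
Definition alpha (delta : nat) (q : list (list CC)) : R :=
  fold_right Rmax 0
    (map (fun nm => INR (fst nm) / INR (delta - snd nm)) (monomials q)).

Definition inW (Rr a : R) (z w : CC) : Prop :=
  Cnorm z > Rr /\ Cnorm w > Rr * Rpower (Cnorm z) a.

(* Write u = |z|, t = u^alpha and X = |w| / t.  The proof rests on three estimates.
   1. A monic polynomial of degree n satisfies | |p(z)| - u^n | * u <= K u^n
      for u >= 1; hence (|p(z)| / u^n)^alpha -> 1 and |p(z)|^alpha ~ t^delta.
   2. By the definition of alpha, every coefficient c_m(z) of w^m in q with
      m < delta is O(u^{alpha (delta - m)}) = O(t^{delta - m}), so the part of q
      of degree < d in w is O(t^delta X^(d-1)).
   3. The top coefficient b(z) w^d has modulus ~ u^gamma t^d X^d = t^delta X^d,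
      precisely because gamma = alpha (delta - d).
   Together, |q(z,w)| / (t^delta X^d) = 1 + O(1/u + 1/X), which divided by
   |p(z)|^alpha / t^delta gives the limit.  Invariance of W_R follows from the
   limit (with error 1/2) together with |p(z)| >= |z| for large |z| (delta >= 2)
   and X^d >= 2X for X >= 2 (d >= 2). *)

From Stdlib Require Import Reals List Lra Lia.
From Coquelicot Require Import Complex.
Open Scope R_scope.

Lemma Cnorm_ge0 a : 0 <= Cnorm a.
Proof. exact (Cmod_ge_0 a). Qed.

Lemma Cnorm_C0 : Cnorm C0 = 0.
Proof. exact Cmod_0. Qed.

Lemma Cnorm_add a b : Cnorm (Cadd a b) <= Cnorm a + Cnorm b.
Proof. exact (Cmod_triangle a b). Qed.

Lemma Cnorm_mul a b : Cnorm (Cmul a b) = Cnorm a * Cnorm b.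
Proof. exact (Cmod_mult a b). Qed.

Lemma Cnorm_pow z n : Cnorm (Cpow z n) = Cnorm z ^ n.
Proof. exact (Cmod_pow z n). Qed.

Lemma Cnorm_add_dev a b : Rabs (Cnorm (Cadd a b) - Cnorm b) <= Cnorm a.
Proof.
  assert (Hb : Cnorm b <= Cnorm (Cadd a b) + Cnorm a).
  { pose proof (Cmod_triangle (Cadd a b) (Copp a)) as H.
    rewrite Cmod_opp in H.
    replace (Cplus (Cadd a b) (Copp a)) with b in H
      by (destruct a, b; unfold Cplus, Cadd, Copp; simpl; f_equal; ring).
    exact H. }
  pose proof (Cnorm_add a b).
  apply Rabs_le; lra.
Qed.

Lemma peval_app l1 l2 z :
  peval (l1 ++ l2) z = Cadd (peval l1 z) (Cmul (Cpow z (length l1)) (peval l2 z)).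
Proof.
  induction l1 as [|c l1 IH]; simpl.
  - destruct (peval l2 z); unfold Cadd, Cmul, C0; simpl; f_equal; ring.
  - rewrite IH. destruct c, (peval l1 z), (peval l2 z), (Cpow z (length l1)), z.
    unfold Cadd, Cmul; simpl; f_equal; ring.
Qed.

Lemma peval_snoc l c z :
  peval (l ++ c :: nil) z = Cadd (peval l z) (Cmul (Cpow z (length l)) c).
Proof.
  rewrite peval_app. f_equal. f_equal. simpl.
  destruct c; unfold Cadd, Cmul, C0; simpl; f_equal; ring.
Qed.

Fixpoint csum (l : list CC) : R :=
  match l with nil => 0 | c :: l' => Cnorm c + csum l' end.

Lemma csum_ge0 l : 0 <= csum l.
Proof. induction l as [|c l IH]; simpl; [lra | pose proof (Cnorm_ge0 c); lra]. Qed.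

Lemma csum_snoc l c : csum (l ++ c :: nil) = csum l + Cnorm c.
Proof. induction l as [|c' l IH]; simpl; [ring | rewrite IH; ring]. Qed.

Lemma peval_norm_le_terms l z B :
  (forall i, Cnorm (nth i l C0) * Cnorm z ^ i <= B) ->
  Cnorm (peval l z) <= INR (length l) * B.
Proof.
  induction l as [|c l IH] using rev_ind; intro HB.
  - simpl. rewrite Cnorm_C0. lra.
  - assert (HB0 : 0 <= B).
    { specialize (HB (S (length l))). rewrite nth_overflow, Cnorm_C0 in HB by (rewrite length_app; simpl; lia). lra. }
    assert (IHl : Cnorm (peval l z) <= INR (length l) * B).
    { apply IH. intro i. destruct (Nat.lt_ge_cases i (length l)) as [Hi|Hi].
      - rewrite <- (app_nth1 l (c :: nil) C0 Hi). apply HB.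
      - rewrite nth_overflow, Cnorm_C0 by exact Hi. lra. }
    specialize (HB (length l)). rewrite nth_middle in HB.
    rewrite peval_snoc, length_app, plus_INR. simpl (INR (length (c :: nil))).
    eapply Rle_trans. apply Cnorm_add.
    rewrite Cnorm_mul, Cnorm_pow. lra.
Qed.

Lemma peval_norm_le_csum l z B : 0 <= B ->
  (forall i, nth i l C0 <> C0 -> Cnorm z ^ i <= B) ->
  Cnorm (peval l z) <= csum l * B.
Proof.
  induction l as [|c l IH] using rev_ind; intros HB0 HB.
  - simpl. rewrite Cnorm_C0. lra.
  - assert (IHl : Cnorm (peval l z) <= csum l * B).
    { apply IH; auto. intros i Hi. destruct (Nat.lt_ge_cases i (length l)) as [Hl|Hl].
      - apply HB. rewrite app_nth1 by exact Hl. exact Hi.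
      - exfalso. apply Hi, nth_overflow, Hl. }
    rewrite peval_snoc, csum_snoc.
    eapply Rle_trans. apply Cnorm_add.
    rewrite Cnorm_mul, Cnorm_pow.
    destruct (Ceq_dec c C0) as [->|Hc].
    + rewrite Cnorm_C0. lra.
    + assert (Hz := HB (length l)). rewrite nth_middle in Hz.
      pose proof (Cnorm_ge0 c). specialize (Hz Hc). nra.
Qed.

Lemma list_snoc_nth (A : Type) (l : list A) n (x : A) :
  length l = S n -> l = firstn n l ++ nth n l x :: nil.
Proof.
  intro Hl. rewrite <- (firstn_skipn n l) at 1. f_equal.
  assert (Hs : length (skipn n l) = 1%nat) by (rewrite length_skipn; lia).
  rewrite <- (Nat.add_0_r n) at 2. rewrite <- nth_skipn.
  destruct (skipn n l) as [|y [|y' t]]; simpl in *; congruence || lia.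
Qed.

(* A monic polynomial of degree n is close to z^n:  | |l(z)| - |z|^n | |z| <= K |z|^n
   for |z| >= 1.  Multiplying by z shifts the lower coefficients into degrees
   1..n, which is how the extra factor |z| is absorbed. *)
Lemma monic_estimate l n : monic_deg l n -> exists K, 0 <= K /\
  forall z, 1 <= Cnorm z ->
  Rabs (Cnorm (peval l z) - Cnorm z ^ n) * Cnorm z <= K * Cnorm z ^ n.
Proof.
  intros [Hlen Htop].
  set (low := firstn n l).
  assert (Hlow : length low = n) by (unfold low; rewrite length_firstn; lia).
  exists (csum (C0 :: low)). split; [apply csum_ge0|]. intros z Hz.
  assert (Hsplit : peval l z = Cadd (peval low z) (Cpow z n)).
  { rewrite (list_snoc_nth _ l n C0 Hlen) at 1. fold low. rewrite Htop, peval_snoc, Hlow.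
    f_equal. destruct (Cpow z n); unfold Cmul, C1; simpl; f_equal; ring. }
  assert (Hshift : Cnorm (peval (C0 :: low) z) = Cnorm (peval low z) * Cnorm z).
  { simpl. replace (Cadd C0 (Cmul z (peval low z))) with (Cmul z (peval low z))
      by (destruct (Cmul z (peval low z)); unfold Cadd, C0; simpl; f_equal; ring).
    rewrite Cnorm_mul. ring. }
  assert (Hbound : Cnorm (peval (C0 :: low) z) <= csum (C0 :: low) * Cnorm z ^ n).
  { apply peval_norm_le_csum; [apply pow_le; lra|]. intros i Hi.
    apply Rle_pow; [exact Hz|].
    destruct i as [|i]; [contradiction|]. simpl in Hi.
    destruct (Nat.lt_ge_cases i n) as [Hin|Hin]; [lia|].
    exfalso. apply Hi, nth_overflow. lia. }
  pose proof (Cnorm_add_dev (peval low z) (Cpow z n)) as Hdev.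
  rewrite Cnorm_pow in Hdev. rewrite Hsplit.
  eapply Rle_trans; [|exact Hbound]. rewrite Hshift.
  apply Rmult_le_compat_r; lra.
Qed.

Lemma Rpower_pos x y : 0 < Rpower x y.
Proof. apply exp_pos. Qed.

Lemma Rpower_mult_pow u a k : 0 < u -> Rpower u (a * INR k) = Rpower u a ^ k.
Proof. intro Hu. rewrite <- Rpower_mult. apply Rpower_pow, Rpower_pos. Qed.

Lemma Rpower_pow_base u a n : 0 < u -> Rpower (u ^ n) a = Rpower u a ^ n.
Proof.
  intro Hu. rewrite <- (Rpower_pow n u Hu), Rpower_mult, Rmult_comm.
  apply Rpower_mult_pow, Hu.
Qed.

Lemma fold_Rmax_in x l : In x l -> x <= fold_right Rmax 0 l.
Proof.
  induction l as [|y l IH]; simpl; [tauto|]. intros [->|H].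
  - apply Rmax_l.
  - eapply Rle_trans; [apply IH, H | apply Rmax_r].
Qed.

Lemma monomials_in q n m : qcoef q n m <> C0 -> In (n, m) (monomials q).
Proof.
  intro H. unfold monomials. apply in_flat_map. exists m. split.
  - apply in_seq. split; [lia|]. simpl.
    destruct (Nat.lt_ge_cases m (length q)) as [Hm|Hm]; [exact Hm|].
    exfalso; apply H. unfold qcoef. rewrite (nth_overflow q nil Hm). destruct n; reflexivity.
  - apply in_flat_map. exists n. split.
    + apply in_seq. split; [lia|]. simpl.
      destruct (Nat.lt_ge_cases n (length (nth m q nil))) as [Hn|Hn]; [exact Hn|].
      exfalso; apply H. unfold qcoef. apply nth_overflow, Hn.
    + destruct (Ceq_dec (qcoef q n m) C0); [contradiction | left; reflexivity].
Qed.

Lemma alpha_bounds_exponent q delta n m : qcoef q n m <> C0 -> (m < delta)%nat ->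
  INR n <= alpha delta q * INR (delta - m).
Proof.
  intros H Hm.
  assert (Hpos : 0 < INR (delta - m)) by (apply lt_0_INR; lia).
  assert (Hle : INR n / INR (delta - m) <= alpha delta q).
  { apply fold_Rmax_in.
    apply (in_map (fun nm => INR (fst nm) / INR (delta - snd nm)) _ (n, m)).
    apply monomials_in, H. }
  apply Rmult_le_compat_r with (r := INR (delta - m)) in Hle; [|lra].
  unfold Rdiv in Hle. rewrite Rmult_assoc, Rinv_l, Rmult_1_r in Hle; lra.
Qed.

Lemma coef_poly_bound q delta m z : (m < delta)%nat -> 1 <= Cnorm z ->
  Cnorm (peval (nth m q nil) z) <=
  csum (nth m q nil) * Rpower (Cnorm z) (alpha delta q) ^ (delta - m).
Proof.
  intros Hm Hz.
  rewrite <- Rpower_mult_pow by lra.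
  apply peval_norm_le_csum; [left; apply Rpower_pos|]. intros i Hi.
  rewrite <- (Rpower_pow i (Cnorm z)) by lra.
  apply Rle_Rpower; [exact Hz|]. apply alpha_bounds_exponent; assumption.
Qed.

Definition coef_mass (q : list (list CC)) : R :=
  fold_right (fun c acc => csum c + acc) 0 q.

Lemma coef_mass_ge0 q : 0 <= coef_mass q.
Proof. induction q as [|c q IH]; simpl; [lra | pose proof (csum_ge0 c); lra]. Qed.

Lemma csum_le_coef_mass q m : csum (nth m q nil) <= coef_mass q.
Proof.
  revert m; induction q as [|c q IH]; intro m; simpl.
  - destruct m; simpl; lra.
  - pose proof (csum_ge0 c). pose proof (coef_mass_ge0 q).
    destruct m; [lra | specialize (IH m); lra].
Qed.

Definition qlow (q : list (list CC)) (d : nat) (z w : CC) : CC :=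
  peval (map (fun c => peval c z) (firstn d q)) w.

Lemma qeval_split q d z w : length q = S d ->
  qeval q z w = Cadd (qlow q d z w) (Cmul (Cpow w d) (peval (nth d q nil) z)).
Proof.
  intro Hl. unfold qeval, qlow.
  rewrite (list_snoc_nth _ q d nil Hl) at 1.
  rewrite map_app; cbn [map]. rewrite peval_snoc, length_map, length_firstn.
  replace (Nat.min d (length q)) with d by lia. reflexivity.
Qed.

(* The lower part is O(t^delta X^(d-1)) where t = |z|^alpha and |w| = X t, X >= 1:
   each term c_m(z) w^m is at most coef_mass q * t^(delta-m) * X^m t^m. *)
Lemma qlow_bound q delta d z w X : (d < delta)%nat -> 1 <= Cnorm z -> 1 <= X ->
  Cnorm w = X * Rpower (Cnorm z) (alpha delta q) ->
  Cnorm (qlow q d z w) <=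
  INR d * (coef_mass q * Rpower (Cnorm z) (alpha delta q) ^ delta * X ^ (d - 1)).
Proof.
  intros Hd Hz HX Hw. set (t := Rpower (Cnorm z) (alpha delta q)) in *.
  assert (Ht : 0 < t) by apply Rpower_pos.
  assert (HK := coef_mass_ge0 q).
  set (B := coef_mass q * t ^ delta * X ^ (d - 1)).
  assert (HB : 0 <= B) by (unfold B; repeat apply Rmult_le_pos; auto; apply pow_le; lra).
  assert (Hlen : INR (length (map (fun c => peval c z) (firstn d q))) <= INR d)
    by (apply le_INR; rewrite length_map, length_firstn; lia).
  eapply Rle_trans; [|apply Rmult_le_compat_r; [exact HB | exact Hlen]].
  apply peval_norm_le_terms. intro i.
  change C0 with ((fun c => peval c z) nil). rewrite map_nth, nth_firstn.
  destruct (Nat.ltb_spec i d) as [Hi|Hi]; [|simpl; rewrite Cnorm_C0, Rmult_0_l; exact HB].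
  assert (Hc : Cnorm (peval (nth i q nil) z) <= coef_mass q * t ^ (delta - i)).
  { eapply Rle_trans; [apply (coef_poly_bound q delta); [lia | exact Hz]|].
    apply Rmult_le_compat_r; [apply pow_le, Rlt_le, Rpower_pos | apply csum_le_coef_mass]. }
  assert (Htt : t ^ (delta - i) * t ^ i = t ^ delta) by (rewrite <- pow_add; f_equal; lia).
  assert (HXi : X ^ i <= X ^ (d - 1)) by (apply Rle_pow; [exact HX | lia]).
  pose proof (pow_le t (delta - i) ltac:(lra)). pose proof (pow_le t i ltac:(lra)).
  pose proof (pow_le X i ltac:(lra)).
  rewrite Hw, Rpow_mult_distr. unfold B.
  apply Rle_trans with (coef_mass q * t ^ (delta - i) * (X ^ i * t ^ i)).
  - apply Rmult_le_compat_r; [nra | exact Hc].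
  - replace (coef_mass q * t ^ (delta - i) * (X ^ i * t ^ i))
      with (coef_mass q * (t ^ (delta - i) * t ^ i) * X ^ i) by ring.
    rewrite Htt. apply Rmult_le_compat_l; [|exact HXi].
    apply Rmult_le_pos; [exact HK | apply pow_le; lra].
Qed.

Lemma Rdiv_le_compat x c y : 0 < y -> x <= c -> x / y <= c / y.
Proof. intros Hy H. unfold Rdiv. apply Rmult_le_compat_r; [left; apply Rinv_0_lt_compat|]; assumption. Qed.

Lemma Rabs_div_pos x y : 0 < y -> Rabs (x / y) = Rabs x / y.
Proof. intro Hy. unfold Rdiv. rewrite Rabs_mult, Rabs_inv, (Rabs_right y) by lra. reflexivity. Qed.

Lemma small_quotient K u e : 0 <= K -> 0 < e -> 2 * K / e < u -> K / u <= e / 2.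
Proof.
  intros HK He Hu.
  assert (H2K : 0 <= 2 * K / e) by (unfold Rdiv; apply Rmult_le_pos; [lra | left; apply Rinv_0_lt_compat, He]).
  assert (HKu : 2 * K < e * u).
  { apply Rmult_lt_compat_l with (r := e) in Hu; [|exact He].
    replace (e * (2 * K / e)) with (2 * K) in Hu by (field; lra). exact Hu. }
  apply Rmult_le_reg_r with u; [lra|]. unfold Rdiv.
  rewrite Rmult_assoc, Rinv_l, Rmult_1_r by lra. lra.
Qed.

Lemma rel_error_split Q beta s T Y : 0 < s -> 0 < T -> 0 < Y ->
  Rabs (Q / (s * T * Y) - 1) <= Rabs (Q - Y * T * beta) / (s * T * Y) + Rabs (beta - s) / s.
Proof.
  intros Hs HT HY. assert (HsTY : 0 < s * T * Y) by (repeat apply Rmult_lt_0_compat; auto).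
  replace (Q / (s * T * Y) - 1) with ((Q - Y * T * beta) / (s * T * Y) + (beta - s) / s)
    by (field; lra).
  eapply Rle_trans; [apply Rabs_triang|]. rewrite !Rabs_div_pos by assumption. lra.
Qed.

Lemma ratio_close A B e : e <= 1/2 -> Rabs (A - 1) <= e -> Rabs (B - 1) <= e ->
  Rabs (A / B - 1) <= 4 * e.
Proof.
  intros He HA HB.
  assert (HB2 : 1/2 <= B) by (unfold Rabs in HB; destruct (Rcase_abs (B - 1)); lra).
  replace (A / B - 1) with ((A - 1 - (B - 1)) / B) by (field; lra).
  rewrite Rabs_div_pos by lra.
  assert (Hnum : Rabs (A - 1 - (B - 1)) <= 2 * e).
  { unfold Rminus at 1. eapply Rle_trans; [apply Rabs_triang|]. rewrite Rabs_Ropp. lra. }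
  apply Rle_trans with (2 * e / (1/2)); [|right; field].
  unfold Rdiv. apply Rmult_le_compat; [apply Rabs_pos | left; apply Rinv_0_lt_compat; lra | exact Hnum|].
  apply Rinv_le_contravar; lra.
Qed.

Lemma Rpower_continuous_at_1 a e : 0 < e -> exists d0, 0 < d0 /\
  forall x, Rabs (x - 1) < d0 -> Rabs (Rpower x a - 1) < e.
Proof.
  intro He.
  assert (Hc : continuity_pt (fun x => Rpower x a) 1).
  { apply derivable_continuous_pt. exists (a * Rpower 1 (a - 1)).
    apply derivable_pt_lim_power. lra. }
  assert (H1 : Rpower 1 a = 1) by (unfold Rpower; rewrite ln_1, Rmult_0_r; apply exp_0).
  destruct (Hc e He) as [d0 [Hd0 H]]. exists d0. split; [exact Hd0|]. intros x Hx.
  destruct (Req_dec x 1) as [->|Hne].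
  - rewrite H1, Rminus_diag, Rabs_R0. exact He.
  - specialize (H x). simpl in H. unfold R_dist in H. rewrite H1 in H. apply H.
    split; [split; [exact I | auto] | exact Hx].
Qed.

Lemma monic_power_asymptotics l n a : monic_deg l n -> forall e, 0 < e -> exists M, 0 < M /\
  forall z, M < Cnorm z ->
  Rabs (Rpower (Cnorm (peval l z)) a / Rpower (Cnorm z) a ^ n - 1) < e.
Proof.
  intros Hl e He.
  destruct (monic_estimate l n Hl) as [K [HK Hest]].
  destruct (Rpower_continuous_at_1 a e He) as [d0 [Hd0 Hcont]].
  assert (HKd : 0 <= K / d0) by (unfold Rdiv; apply Rmult_le_pos; [lra | left; apply Rinv_0_lt_compat, Hd0]).
  exists (1 + K + K / d0). split; [lra|]. intros z Hz.
  set (u := Cnorm z) in *. set (P := Cnorm (peval l z)) in *.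
  assert (Hu1 : 1 <= u) by lra.
  assert (Hun : 0 < u ^ n) by (apply pow_lt; lra).
  set (rho := P / u ^ n).
  assert (Hrho : Rabs (rho - 1) * u <= K).
  { replace (rho - 1) with ((P - u ^ n) / u ^ n) by (unfold rho; field; lra).
    rewrite Rabs_div_pos by exact Hun.
    apply Rmult_le_reg_r with (u ^ n); [exact Hun|].
    replace (Rabs (P - u ^ n) / u ^ n * u * u ^ n) with (Rabs (P - u ^ n) * u) by (field; lra).
    apply Hest, Hu1. }
  assert (HKu : K < d0 * u).
  { apply Rmult_lt_reg_r with (/ d0); [apply Rinv_0_lt_compat, Hd0|].
    replace (d0 * u * / d0) with u by (field; lra). unfold Rdiv in Hz. lra. }
  assert (Hclose : Rabs (rho - 1) < d0).
  { apply Rmult_lt_reg_r with u; [lra|]. lra. }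
  assert (Hrho_pos : 0 < rho).
  { assert (Rabs (rho - 1) < 1) by (apply Rmult_lt_reg_r with u; lra).
    apply Rabs_def2 in H. lra. }
  replace (Rpower P a) with (Rpower rho a * Rpower u a ^ n).
  - replace (Rpower rho a * Rpower u a ^ n / Rpower u a ^ n) with (Rpower rho a)
      by (field; apply pow_nonzero, Rgt_not_eq, Rpower_pos).
    apply Hcont, Hclose.
  - rewrite <- Rpower_pow_base, Rpower_mult_distr by lra.
    f_equal. unfold rho. field. lra.
Qed.

Lemma monic_dominates l n : monic_deg l n -> (2 <= n)%nat ->
  exists R1, 0 < R1 /\ forall z, R1 <= Cnorm z -> Cnorm z <= Cnorm (peval l z).
Proof.
  intros Hl Hn.
  destruct (monic_estimate l n Hl) as [K [HK Hest]].
  exists (K + 1). split; [lra|]. intros z Hz.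
  set (u := Cnorm z) in *. set (P := Cnorm (peval l z)).
  assert (Hu1 : 1 <= u) by lra.
  specialize (Hest z Hu1). fold u P in Hest.
  assert (Hu2 : u * u <= u ^ n) by (replace (u * u) with (u ^ 2) by ring; apply Rle_pow; [exact Hu1 | exact Hn]).
  assert (Hlow : u ^ n - P <= Rabs (P - u ^ n)) by (rewrite Rabs_minus_sym; apply Rle_abs).
  assert (HPu : u ^ n * (u - K) <= P * u) by nra.
  apply Rmult_le_reg_r with u; nra.
Qed.

Definition wscale (a : R) (z w : CC) : R := Cnorm w / Rpower (Cnorm z) a.

Section Lemma45.

Variables (p b : list CC) (q : list (list CC)) (delta d gamma : nat).
Hypothesis Hp : monic_deg p delta.
Hypothesis Hd2 : (2 <= d)%nat.
Hypothesis Hq_len : length q = S d.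
Hypothesis Hq_top : nth d q nil = b.
Hypothesis Hb : monic_deg b gamma.
Hypothesis Hd_lt : (d < delta)%nat.
Hypothesis Halpha : alpha delta q = INR gamma / INR (delta - d).

Local Notation a := (alpha delta q).

(* Main estimate: |q(z,w)| / (t^delta X^d) = 1 + O(1/|z| + 1/X), using qeval_split,
   qlow_bound for the lower part and monic_estimate for b, with |z|^gamma = t^(delta-d). *)
Lemma q_normalized_estimate : exists K, 0 <= K /\ forall z w,
  1 <= Cnorm z -> 1 <= wscale a z w ->
  Rabs (Cnorm (qeval q z w) / (Rpower (Cnorm z) a ^ delta * wscale a z w ^ d) - 1)
    <= K / Cnorm z + K / wscale a z w.
Proof.
  destruct (monic_estimate b gamma Hb) as [Kb [HKb Hbest]].
  set (K2 := INR d * coef_mass q).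
  assert (HK2 : 0 <= K2) by (apply Rmult_le_pos; [apply pos_INR | apply coef_mass_ge0]).
  exists (K2 + Kb). split; [lra|]. intros z w Hz HX.
  set (u := Cnorm z) in *. set (t := Rpower u a) in *. set (X := wscale a z w) in *.
  assert (Ht : 0 < t) by apply Rpower_pos.
  assert (Hw : Cnorm w = X * t) by (unfold X, wscale; fold u t; field; lra).
  set (s := t ^ (delta - d)).
  assert (Hs : 0 < s) by (apply pow_lt, Ht).
  assert (HTd : 0 < t ^ d) by (apply pow_lt, Ht).
  assert (HXd : 0 < X ^ d) by (apply pow_lt; lra).
  assert (Hts : t ^ delta = s * t ^ d) by (unfold s; rewrite <- pow_add; f_equal; lia).
  assert (Hus : u ^ gamma = s).
  { assert (Hg : INR gamma = a * INR (delta - d))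
      by (rewrite Halpha; field; apply not_0_INR; lia).
    rewrite <- (Rpower_pow gamma u), Hg by lra. apply Rpower_mult_pow. lra. }
  rewrite (qeval_split q d z w Hq_len), Hq_top, Hts.
  set (E := qlow q d z w). set (beta := Cnorm (peval b z)).
  assert (HE := qlow_bound q delta d z w X Hd_lt Hz HX Hw). fold u in HE. fold t E in HE. rewrite Hts in HE.
  assert (Hlead : Cnorm (Cmul (Cpow w d) (peval b z)) = X ^ d * t ^ d * beta)
    by (rewrite Cnorm_mul, Cnorm_pow, Hw, Rpow_mult_distr; reflexivity).
  assert (HQ := Cnorm_add_dev E (Cmul (Cpow w d) (peval b z))). rewrite Hlead in HQ.
  assert (Hbeta : Rabs (beta - s) * u <= Kb * s) by (rewrite <- Hus; apply Hbest, Hz).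
  eapply Rle_trans; [apply rel_error_split; assumption|]. rewrite Rplus_comm.
  apply Rplus_le_compat.
  - apply Rle_trans with (Kb / u); [|apply Rdiv_le_compat; lra].
    replace (Rabs (beta - s) / s) with (Rabs (beta - s) * u / s / u) by (field; lra).
    apply Rdiv_le_compat; [lra|]. replace Kb with (Kb * s / s) by (field; lra).
    apply Rdiv_le_compat; lra.
  - apply Rle_trans with (K2 / X); [|apply Rdiv_le_compat; lra].
    assert (HXsplit : X ^ d = X * X ^ (d - 1)) by (replace d with (S (d - 1)) at 1 by lia; reflexivity).
    replace (K2 / X) with (INR d * (coef_mass q * (s * t ^ d) * X ^ (d - 1)) / (s * t ^ d * X ^ d))
      by (unfold K2; rewrite HXsplit; field; repeat split; try lra; apply pow_nonzero; lra).
    apply Rdiv_le_compat; [repeat apply Rmult_lt_0_compat; assumption|]. lra.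
Qed.

Lemma normalized_ratio_limit : forall eps, eps > 0 -> exists M, M > 0 /\
  forall z w : CC, Cnorm z > M -> Cnorm w / Rpower (Cnorm z) a > M ->
  Rabs ((Cnorm (qeval q z w) / Rpower (Cnorm (peval p z)) a)
          / (Cnorm w / Rpower (Cnorm z) a) ^ d - 1) < eps.
Proof.
  intros eps Heps.
  set (e := Rmin (1/2) (eps/8)).
  assert (He : 0 < e) by (apply Rmin_glb_lt; lra).
  assert (He1 : e <= 1/2) by apply Rmin_l.
  assert (He2 : e <= eps/8) by apply Rmin_r.
  destruct (monic_power_asymptotics p delta a Hp e He) as [M1 [HM1 Hpow]].
  destruct q_normalized_estimate as [K [HK Hq]].
  assert (HKe : 0 <= 2 * K / e) by (unfold Rdiv; apply Rmult_le_pos; [lra | left; apply Rinv_0_lt_compat, He]).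
  exists (M1 + 1 + 2 * K / e). split; [lra|]. intros z w Hz Hw.
  change (Cnorm w / Rpower (Cnorm z) a) with (wscale a z w) in *.
  set (u := Cnorm z) in *. set (t := Rpower u a) in *. set (X := wscale a z w) in *.
  assert (Hu1 : 1 <= u) by lra. assert (HX1 : 1 <= X) by lra.
  assert (Hq_close : Rabs (Cnorm (qeval q z w) / (t ^ delta * X ^ d) - 1) <= e).
  { apply Rle_trans with (K / u + K / X); [apply Hq; assumption|].
    assert (K / u <= e / 2) by (apply small_quotient; lra).
    assert (K / X <= e / 2) by (apply small_quotient; lra). lra. }
  assert (Hp_close : Rabs (Rpower (Cnorm (peval p z)) a / t ^ delta - 1) <= e)
    by (left; apply Hpow; fold u; lra).
  assert (Ht : 0 < t) by apply Rpower_pos.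
  assert (HX : 0 < X) by lra.
  replace (Cnorm (qeval q z w) / Rpower (Cnorm (peval p z)) a / X ^ d)
    with ((Cnorm (qeval q z w) / (t ^ delta * X ^ d)) / (Rpower (Cnorm (peval p z)) a / t ^ delta))
    by (field; repeat split; try apply pow_nonzero; try apply Rgt_not_eq, Rpower_pos; lra).
  eapply Rle_lt_trans; [apply ratio_close; eassumption|]. lra.
Qed.

Hypothesis Hdelta2 : (2 <= delta)%nat.

(* Second part: W_R is forward invariant for all R >= R0.  With the ratio V > 1/2,
   |q| = V |p|^alpha X^d > X |p|^alpha since X^d >= X^2 >= 2X. *)
Lemma invariant_region : exists R0, R0 > 0 /\ forall Rr, Rr >= R0 -> forall z w : CC,
  inW Rr a z w -> inW Rr a (peval p z) (qeval q z w).
Proof.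
  destruct (normalized_ratio_limit (1/2) ltac:(lra)) as [M [HM Hratio]].
  destruct (monic_dominates p delta Hp Hdelta2) as [R1 [HR1 Hdom]].
  exists (M + R1 + 2). split; [lra|]. intros Rr HRr z w [Hz Hw].
  set (u := Cnorm z) in *. set (t := Rpower u a) in *.
  assert (Ht : 0 < t) by apply Rpower_pos.
  set (X := Cnorm w / t).
  assert (HX : X > Rr).
  { unfold X. apply Rmult_gt_reg_r with t; [exact Ht|]. unfold Rdiv.
    rewrite Rmult_assoc, Rinv_l, Rmult_1_r by lra. lra. }
  assert (Hdom_z : u <= Cnorm (peval p z)) by (apply Hdom; fold u; lra).
  split; [lra|].
  specialize (Hratio z w). fold u in Hratio. fold t X in Hratio.
  specialize (Hratio ltac:(lra) ltac:(lra)).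
  set (Pa := Rpower (Cnorm (peval p z)) a) in *. set (Q := Cnorm (qeval q z w)) in *.
  assert (HPa : 0 < Pa) by apply Rpower_pos.
  assert (HXd : X * X <= X ^ d) by (replace (X * X) with (X ^ 2) by ring; apply Rle_pow; [lra | exact Hd2]).
  assert (HXd0 : 0 < X ^ d) by (apply pow_lt; lra).
  set (V := Q / Pa / X ^ d) in *.
  assert (HV : V > 1/2) by (unfold Rabs in Hratio; destruct (Rcase_abs (V - 1)); lra).
  replace Q with (V * Pa * X ^ d) by (unfold V; field; lra).
  assert (V * X ^ d > X) by nra. nra.
Qed.

End Lemma45.

Theorem lemma4p5 (p : list CC) (q : list (list CC)) (b : list CC)
    (delta d gamma : nat) :
  (2 <= delta)%nat -> monic_deg p delta ->
  (2 <= d)%nat -> length q = S d -> nth d q nil = b -> monic_deg b gamma ->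
  (delta > d)%nat ->
  alpha delta q = INR gamma / INR (delta - d) ->
  let a := alpha delta q in
  (forall eps, eps > 0 -> exists M, M > 0 /\
     forall z w : CC, Cnorm z > M -> Cnorm w / Rpower (Cnorm z) a > M ->
       Rabs ((Cnorm (qeval q z w) / Rpower (Cnorm (peval p z)) a)
               / (Cnorm w / Rpower (Cnorm z) a) ^ d - 1) < eps)
  /\
  (exists R0, R0 > 0 /\ forall Rr, Rr >= R0 -> forall z w : CC,
     inW Rr a z w -> inW Rr a (peval p z) (qeval q z w)).
Proof.
  intros Hdelta2 Hp Hd2 Hq_len Hq_top Hb Hd_lt Halpha a. split.
  - exact (normalized_ratio_limit p b q delta d gamma Hp Hd2 Hq_len Hq_top Hb Hd_lt Halpha).
  - exact (invariant_region p b q delta d gamma Hp Hd2 Hq_len Hq_top Hb Hd_lt Halpha Hdelta2).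
Qed.
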